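(* Let $n\ge1$, $v>0$, $0\le\rho<\frac12v$, and let $B=(b_{jk})_{j,k=0}^n$ with $b_{jk}=v-k$ if $j>k$, $b_{kk}=\frac v2-k-\rho$, $b_{jk}=-j$ if $j<k$. The unique ESS $\mathbf{p}=(p_0,\dots,p_n)^T$ of $B$ is given as follows. If $v\ge2n+2\rho$, then $p_0=\dots=p_{n-1}=0$, $p_n=1$. Otherwise there is a unique index $s\in\{0,\dots,n-1\}$ such that $n-1+\rho\le\frac v2+s<n+\rho$, and $$p_k=\frac1c\Big(-\frac v2-\rho\Big)^k\Big\{u_{s-k+1}+\Big(s+1-n+\frac v2+\rho\Big)u_{s-k}+(s+1-n)\Big(\frac v2+\rho\Big)u_{s-k-1}\Big\},\quad0\le k\le s,$$ $$p_k=0,\quad s+1\le k\le n-1,\qquad p_n=\frac1c\Big(-\frac v2-\rho\Big)^{s+1},$$ where $\gamma=\sqrt{\frac{v^2}{4}-\rho^2}$, $u_k=(-i\gamma)^kU_k\big(-\frac{i(2\rho+1)}{2\gamma}\big)$ and $$c=-u_{s+2}+(n-s-1-2\rho)u_{s+1}+\{2\rho(n-s-1)+\gamma^2\}u_s-(n-s-1)\gamma^2u_{s-1}.$$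
   Context: $U_m$ denotes the $m$th Chebyshev polynomial of the second kind (evaluated at complex arguments as a polynomial), with the convention $U_{-1}\equiv0$; $i=\sqrt{-1}$. Strategies are indexed $0,\dots,n$, $\overline\Delta=\{\mathbf{q}\in[0,1]^{n+1}:\sum q_j=1\}$. $\mathbf{p}\in\overline\Delta$ is an ESS for $B$ if (i) $\mathbf{p}^TB\mathbf{p}\ge\mathbf{q}^TB\mathbf{p}$ for all $\mathbf{q}\in\overline\Delta$ and (ii) whenever $\mathbf{q}\ne\mathbf{p}$ and $\mathbf{p}^TB\mathbf{p}=\mathbf{q}^TB\mathbf{p}$, then $\mathbf{p}^TB\mathbf{q}>\mathbf{q}^TB\mathbf{q}$. *)

From HB Require Import structures.
From mathcomp Require Import all_boot all_order all_algebra.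
From mathcomp Require Import complex.
Set Implicit Arguments. Unset Strict Implicit. Unset Printing Implicit Defensive.
Import Order.TTheory GRing.Theory Num.Theory.
Local Open Scope ring_scope.

Fixpoint chebU_pair {T : comNzRingType} (m : nat) : {poly T} * {poly T} :=
  (* returns (U_m, U_{m-1}) with U_{-1} = 0 *)
  match m with
  | 0%N => (1, 0)
  | m'.+1 => let: (a, b) := chebU_pair m' in ((2%:R *: 'X) * a - b, a)
  end.
Definition chebU {T : comNzRingType} (m : nat) : {poly T} := (chebU_pair m).1.

(* U indexed by an integer, with the convention U_{-1} = 0 (and U_m = 0 for
   all negative m; only m = -1 is ever used). *)
Definition chebUz {T : comNzRingType} (m : int) : {poly T} :=
  match m with Posz k => chebU k | Negz _ => 0 end.

Definition simplex {R : realFieldType} (n : nat) (q : 'I_n.+1 -> R) : Prop :=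
  (forall j, 0 <= q j <= 1) /\ \sum_(j < n.+1) q j = 1.

Definition bform {R : realFieldType} (n : nat) (B : 'M[R]_n.+1)
  (x y : 'I_n.+1 -> R) : R :=
  \sum_(j < n.+1) \sum_(k < n.+1) x j * B j k * y k.

Definition isESS {R : realFieldType} (n : nat) (B : 'M[R]_n.+1)
  (p : 'I_n.+1 -> R) : Prop :=
  simplex p /\
  (forall q, simplex q -> bform B q p <= bform B p p) /\
  (forall q, simplex q -> q <> p -> bform B p p = bform B q p ->
     bform B q q < bform B p q).

Definition payB {R : realFieldType} (n : nat) (v rho : R) : 'M[R]_n.+1 :=
  \matrix_(j, k) (if (k < j)%N then v - (k : nat)%:R
                  else if j == k then v / 2 - (k : nat)%:R - rho
                  else - (j : nat)%:R).

Local Open Scope complex_scope.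

Definition gam {R : rcfType} (v rho : R) : R := Num.sqrt (v ^+ 2 / 4 - rho ^+ 2).

Definition uu {R : rcfType} (v rho : R) (m : int) : R[i] :=
  let g : R[i] := (gam v rho)%:C in
  (- 'i * g) ^ m * (chebUz m).[- 'i * (2 * rho + 1)%:C / (2 * g)].

Definition cc {R : rcfType} (n s : nat) (v rho : R) : R[i] :=
  let u := uu v rho in
  let g2 : R[i] := ((gam v rho) ^+ 2)%:C in
  let r : R[i] := rho%:C in
  let N : R[i] := (n - s - 1)%:R in  (* s < n, so this is the integer n-s-1 *)
  - u (s + 2)%:Z + (N - 2 * r) * u (s + 1)%:Z
  + (2 * r * N + g2) * u s%:Z - N * g2 * u (s%:Z - 1).

Definition pform {R : rcfType} (n s : nat) (v rho : R) (k : nat) : R[i] :=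
  let u := uu v rho in
  let c := cc n s v rho in
  let a : R[i] := (v / 2 + rho)%:C in
  if (k <= s)%N then
    c^-1 * (- a) ^+ k *
      (u (s%:Z - k%:Z + 1) + ((s%:R + 1 - n%:R) + a) * u (s%:Z - k%:Z)
       + (s%:R + 1 - n%:R) * a * u (s%:Z - k%:Z - 1))
  else if (k < n)%N then 0
  else c^-1 * (- a) ^+ s.+1.

From HB Require Import structures.
From mathcomp Require Import all_boot all_order all_algebra.
From mathcomp Require Import complex.
From mathcomp Require Import ring lra zify.
From Stdlib Require Import FunctionalExtensionality.
Set Implicit Arguments. Unset Strict Implicit. Unset Printing Implicit Defensive.
Import Order.TTheory GRing.Theory Num.Theory.
Local Open Scope ring_scope.

(* On the hyperplane [sum x = 0] the quadratic form of [B] equals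
   [- rho * sum_k x_k^2 - sum_t (sum_(k > t) x_k)^2], so it is negative definite
   there: every symmetric Nash equilibrium is then an ESS, and no other ESS exists.
   It remains to exhibit a Nash equilibrium. If [v >= 2n + 2rho] the pure
   strategy [n] is one. Otherwise take the support [{0, ..., s} U {n}]: equalizing
   the payoffs of consecutive pure strategies yields the backward recurrence
   [a p_k = (1 + 2 rho) p_(k+1) + b p_(k+2)] with [a = v/2 + rho], [b = v/2 - rho],
   whose coefficients are positive, so the solution is positive; the bounds on [s]
   make the strategies [s+1, ..., n-1] strictly worse. The recurrence is that of
   the Lucas sequence of [X^2 + (2 rho + 1) X - a b], which is
   [(-i gamma)^m U_m(-i (2 rho + 1) / (2 gamma))]; this gives the closed form. *)

Lemma down_ind (s : nat) (Pr : nat -> Prop) :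
  (forall k, (k <= s)%N -> (forall m, (k < m <= s)%N -> Pr m) -> Pr k) ->
  forall k, (k <= s)%N -> Pr k.
Proof.
move=> IH k; move: {2}(s - k)%N (leqnn (s - k)) => d.
elim: d k => [|d IHd] k le_d le_ks; apply: IH => // m /andP[lt_km le_ms].
  by lia.
by apply: IHd => //; lia.
Qed.

Lemma nat_in_unit_interval (R : realFieldType) (y : R) (N : nat) :
  -1 < y -> y + 1 <= N%:R -> exists s : nat, (s < N)%N /\ y <= s%:R < y + 1.
Proof.
move=> y_gt y_le; have N_gt0 : (0 < N)%N by rewrite -(ltr0n R); lra.
have y_le_pred : y <= N.-1%:R.
  by move: y_le; rewrite -(prednK N_gt0) -natr1 /=; lra.
have [s y_le_s min_s] := ex_minnP (ex_intro (fun m => y <= m%:R) _ y_le_pred).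
exists s; split; first by have := min_s _ y_le_pred; lia.
rewrite y_le_s /=; case: s y_le_s min_s => [|m] _ min_s; first by lra.
have : ~~ (y <= m%:R) by apply/negP => /min_s; rewrite ltnn.
by rewrite -ltNge -natr1; lra.
Qed.

Lemma nat_in_unit_interval_unique (R : realFieldType) (y : R) (s t : nat) :
  y <= s%:R < y + 1 -> y <= t%:R < y + 1 -> s = t.
Proof.
have le_of (i j : nat) : i%:R < y + 1 -> y <= j%:R -> (i <= j)%N.
  move=> i_lt y_le_j; rewrite leqNgt; apply/negP => lt_ji.
  have : j%:R + 1 <= i%:R :> R by rewrite natr1 ler_nat.
  lra.
by move=> /andP[ys sy] /andP[yt ty]; apply/eqP; rewrite eqn_leq !le_of.
Qed.

Section TailSums.
Variables (T : comNzRingType) (N : nat).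
Implicit Types x : nat -> T.

Definition tail x (t : nat) : T := \sum_(k < N | (t < k)%N) x k.

Lemma sum_delta x j : (j < N)%N -> \sum_(k < N) ((k : nat) == j)%:R * x k = x j.
Proof.
move=> ltjN; have := @big_ord1_eq T 0 +%R x j N; rewrite ltjN => <-.
rewrite [RHS]big_mkcond /=.
by apply: eq_bigr => k _; case: eqP => [->|_]; rewrite ?mul1r ?mul0r.
Qed.

Lemma tailE x t : tail x t = \sum_(k < N) (t < k)%N%:R * x k.
Proof. by rewrite /tail big_mkcond; apply: eq_bigr => k _; case: ltnP; rewrite ?mul1r ?mul0r. Qed.

Lemma tailS x t : (t.+1 < N)%N -> tail x t = x t.+1 + tail x t.+1.
Proof.
move=> ltSN; rewrite /tail (bigD1 (Ordinal ltSN)) //=; congr (_ + _).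
by apply: eq_bigl => k; rewrite -val_eqE /= [(t.+1 < k)%N]ltn_neqAle eq_sym andbC.
Qed.

Lemma sum_tail0 x : (0 < N)%N -> \sum_(k < N) x k = x 0%N + tail x 0.
Proof.
move=> N_gt0; rewrite (bigD1 (Ordinal N_gt0)) //=; congr (_ + _).
by apply: eq_bigl => k; rewrite -val_eqE /= lt0n.
Qed.

Lemma tail_eq0 x : \sum_(k < N) x k = 0 -> (forall t, (t < N)%N -> tail x t = 0) ->
  forall k, (k < N)%N -> x k = 0.
Proof.
move=> sum0 tail0 [|k] ltkN.
  by have := sum_tail0 x ltkN; rewrite sum0 tail0 // addr0.
by have := tailS x ltkN; rewrite !tail0 ?addr0 //; lia.
Qed.

Lemma sqr_sum_lower x : (\sum_(k < N) x k) ^+ 2 =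
  \sum_(j < N) \sum_(k < N) x j * x k * (2 * (k < j)%N%:R + (j == k)%:R).
Proof.
have swap : \sum_(j < N) \sum_(k < N) x j * x k * (j < k)%N%:R =
            \sum_(j < N) \sum_(k < N) x j * x k * (k < j)%N%:R.
  by rewrite exchange_big /=; apply: eq_bigr => j _; apply: eq_bigr => k _; ring.
rewrite expr2 mulr_suml; under eq_bigr => j _ do rewrite mulr_sumr.
transitivity (\sum_(j < N) \sum_(k < N)
  (x j * x k * (j < k)%N%:R + x j * x k * ((k < j)%N%:R + (j == k)%:R))).
  apply: eq_bigr => j _; apply: eq_bigr => k _; rewrite -val_eqE /=.
  by case: ltngtP => _ /=; ring.
under eq_bigr => j _ do rewrite big_split /=.
rewrite big_split /= swap -big_split /=.
by apply: eq_bigr => j _; rewrite -big_split /=; apply: eq_bigr => k _; ring.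
Qed.

Lemma sum_diag x : \sum_(j < N) \sum_(k < N) x j * x k * (j == k)%:R =
  \sum_(j < N) x j ^+ 2.
Proof.
apply: eq_bigr => j _; rewrite expr2 -(sum_delta (fun k => x j * x k) (ltn_ord j)).
by apply: eq_bigr => k _; rewrite -val_eqE /= eq_sym; ring.
Qed.

Lemma sum_indicator_lt m : (m <= N)%N -> \sum_(t < N) (t < m)%N%:R = m%:R :> T.
Proof.
move=> lemN; transitivity (\sum_(t < N | (t < m)%N) (1 : T)).
  by rewrite [RHS]big_mkcond; apply: eq_bigr => t _; case: ltnP.
by rewrite big_ord_narrow // sumr_const card_ord.
Qed.

Lemma sum_sqr_tail x : \sum_(t < N) tail x t ^+ 2 =
  \sum_(j < N) \sum_(k < N) x j * x k * (minn j k)%:R.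
Proof.
under eq_bigr => t _ do rewrite expr2 tailE mulr_suml; rewrite exchange_big /=.
apply: eq_bigr => j _; under eq_bigr => t _ do rewrite mulr_sumr; rewrite exchange_big /=.
apply: eq_bigr => k _; rewrite -sum_indicator_lt; last by rewrite geq_min ltnW.
rewrite mulr_sumr; apply: eq_bigr => t _; rewrite ltn_min.
by case: (t < j)%N; case: (t < k)%N => /=; ring.
Qed.

End TailSums.

Section Lucas.
Variables (T : comNzRingType) (P Q : T).

Fixpoint lucas_pair (m : nat) : T * T :=
  if m is m'.+1 then let: (x, y) := lucas_pair m' in (y, P * y - Q * x)
  else (0, 1).

Definition lucas (m : nat) : T := (lucas_pair m).1.

Lemma lucas0 : lucas 0 = 0. Proof. by []. Qed.
Lemma lucas1 : lucas 1 = 1. Proof. by []. Qed.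

Lemma lucasSS m : lucas m.+2 = P * lucas m.+1 - Q * lucas m.
Proof. by rewrite /lucas /=; case: (lucas_pair m). Qed.

Lemma lucas_unique (w : nat -> T) : w 0 = 0 -> w 1 = 1 ->
  (forall m, w m.+2 = P * w m.+1 - Q * w m) -> forall m, w m = lucas m.
Proof.
move=> w0 w1 wSS m; suff: w m = lucas m /\ w m.+1 = lucas m.+1 by case.
elim: m => [|m [IHm IHSm]]; first by rewrite w0 w1.
by rewrite wSS lucasSS IHm IHSm.
Qed.

End Lucas.

Lemma rmorph_lucas (T S : comNzRingType) (f : {rmorphism T -> S}) P Q m :
  f (lucas P Q m) = lucas (f P) (f Q) m.
Proof.
apply: (@lucas_unique _ _ _ (f \o lucas P Q)) => [||k] /=; rewrite ?rmorph0 ?rmorph1 //.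
by rewrite lucasSS rmorphB !rmorphM.
Qed.

Lemma chebU_rec (T : comNzRingType) m :
  chebU (T:=T) m.+2 = 2%:R *: 'X * chebU m.+1 - chebU m.
Proof. by rewrite /chebU /=; case: (chebU_pair m). Qed.

Lemma chebU_lucas (T : comNzRingType) (x y : T) m :
  y ^+ m * (chebU m).[x] = lucas (2 * x * y) (y ^+ 2) m.+1.
Proof.
pose w k := if k is k'.+1 then y ^+ k' * (chebU k').[x] else 0.
apply: (@lucas_unique _ _ _ w _ _ _ m.+1) => [||[|k]] //=.
- by rewrite /chebU /= mul1r hornerC.
- by rewrite /chebU /= mulr1 subr0 hornerE hornerX hornerC; ring.
- by rewrite (chebU_rec T k) hornerD hornerN hornerM hornerZ hornerX !exprS; ring.
Qed.

Section SymmetricGames.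
Variables (R : realFieldType) (n : nat) (B : 'M[R]_n.+1).

Definition nash (p : 'I_n.+1 -> R) : Prop :=
  simplex p /\ forall q, simplex q -> bform B q p <= bform B p p.

Definition zero_sum_negdef : Prop :=
  forall x : 'I_n.+1 -> R, \sum_(j < n.+1) x j = 0 -> 0 <= bform B x x ->
    forall j, x j = 0.

Lemma bform_diag_sub (x y : 'I_n.+1 -> R) :
  bform B (fun j => x j - y j) (fun j => x j - y j) =
  bform B x x - bform B x y - bform B y x + bform B y y.
Proof.
rewrite /bform -!sumrB -big_split /=; apply: eq_bigr => j _.
by rewrite -!sumrB -big_split /=; apply: eq_bigr => k _; ring.
Qed.

Hypothesis negB : zero_sum_negdef.

Lemma negdef_simplex_eq p q : simplex p -> simplex q ->
  bform B p q + bform B q p <= bform B p p + bform B q q -> q = p.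
Proof.
move=> [_ sum_p] [_ sum_q] le_pq; apply: functional_extensionality => j.
apply/eqP; rewrite -subr_eq0; apply/eqP; apply: (negB (x := fun j => q j - p j)).
  by rewrite sumrB sum_p sum_q subrr.
by rewrite bform_diag_sub; lra.
Qed.

Lemma nash_strict p q : nash p -> simplex q -> q <> p ->
  bform B q q < bform B p q.
Proof.
move=> [sp Np] sq neq_qp; rewrite ltNge; apply/negP => le_pq.
by apply: neq_qp; apply: negdef_simplex_eq => //; have := Np q sq; lra.
Qed.

Lemma nash_isESS p : nash p -> isESS B p.
Proof. by move=> [sp Np]; split; [|split] => // q sq neq_qp _; exact: nash_strict. Qed.

Lemma isESS_unique p q : nash p -> isESS B q -> q = p.
Proof.
move=> [sp Np] [sq [Nq _]]; apply: negdef_simplex_eq => //.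
by have := Np q sq; have := Nq p sp; lra.
Qed.

End SymmetricGames.

Lemma simplex_of_ge0 (R : realFieldType) n (p : 'I_n.+1 -> R) :
  (forall j, 0 <= p j) -> \sum_(j < n.+1) p j = 1 -> simplex p.
Proof.
move=> p_ge0 sum_p; split=> // j; rewrite p_ge0 -sum_p (bigD1 j) //= lerDl.
exact: sumr_ge0.
Qed.

Lemma nash_of_payoffs (R : realFieldType) n (B : 'M[R]_n.+1) p (M : R) :
  simplex p ->
  (forall j, \sum_(k < n.+1) B j k * p k <= M) ->
  (forall j, p j != 0 -> \sum_(k < n.+1) B j k * p k = M) ->
  nash B p.
Proof.
move=> sp le_M eq_M; split=> // q [q01 sum_q].
have bformE x : bform B x p = \sum_(j < n.+1) x j * \sum_(k < n.+1) B j k * p k.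
  by apply: eq_bigr => j _; rewrite mulr_sumr; apply: eq_bigr => k _; rewrite mulrA.
rewrite !bformE.
have -> : \sum_(j < n.+1) p j * \sum_(k < n.+1) B j k * p k = M.
  rewrite -[RHS]mul1r -sp.2 mulr_suml; apply: eq_bigr => j _.
  by have [->|/eq_M ->] := eqVneq (p j) 0; rewrite ?mul0r.
rewrite -[leRHS]mul1r -sum_q mulr_suml; apply: ler_sum => j _.
by apply: ler_wpM2l; [case/andP: (q01 j) | exact: le_M].
Qed.

Section Payoffs.
Variables (R : realFieldType) (v rho : R).
Local Notation a := (v / 2 + rho).
Local Notation b := (v / 2 - rho).

Definition pay (j k : nat) : R :=
  if (k < j)%N then v - k%:R else if j == k then v / 2 - k%:R - rho else - j%:R.

Definition payoff n (x : nat -> R) (j : nat) : R := \sum_(k < n.+1) pay j k * x k.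

Lemma payBE n (j k : 'I_n.+1) : payB n v rho j k = pay j k.
Proof. by rewrite mxE. Qed.

Lemma pay_split j k : pay j k =
  v / 2 * (2 * (k < j)%N%:R + (j == k)%:R) - rho * (j == k)%:R - (minn j k)%:R.
Proof.
by rewrite /pay; case: ltngtP => _ /=; field.
Qed.

Lemma pay_quadratic N (x : nat -> R) :
  \sum_(j < N) \sum_(k < N) x j * pay j k * x k =
  v / 2 * (\sum_(k < N) x k) ^+ 2 - rho * \sum_(k < N) x k ^+ 2
  - \sum_(t < N) tail N x t ^+ 2.
Proof.
rewrite sum_sqr_tail sqr_sum_lower -sum_diag !mulr_sumr -!sumrB.
apply: eq_bigr => j _; rewrite !mulr_sumr -!sumrB; apply: eq_bigr => k _.
by rewrite pay_split; ring.
Qed.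

Lemma payB_zero_sum_negdef n : 0 <= rho -> zero_sum_negdef (payB n v rho).
Proof.
move=> rho_ge0 x sum_x0 bform_ge0 j.
pose X k := x (inord k).
have XE (i : 'I_n.+1) : X i = x i by rewrite /X inord_val.
have sum_X0 : \sum_(k < n.+1) X k = 0 by under eq_bigr do rewrite XE.
have sq_ge0 (F : nat -> R) : 0 <= \sum_(t < n.+1) F t ^+ 2.
  by apply: sumr_ge0 => t _; exact: sqr_ge0.
have tail_sqr0 : \sum_(t < n.+1) tail n.+1 X t ^+ 2 = 0.
  move: bform_ge0; rewrite /bform.
  under eq_bigr => i _ do under eq_bigr => k _ do rewrite payBE -!XE.
  rewrite pay_quadratic sum_X0 expr0n /= mulr0 add0r.
  have := sq_ge0 X; have := sq_ge0 (tail n.+1 X); nra.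
have tail0 t : (t < n.+1)%N -> tail n.+1 X t = 0.
  move=> lt_tn; apply/eqP; rewrite -sqrf_eq0; apply/eqP.
  have sqr_tail_ge0 (i : 'I_n.+1) : true -> 0 <= tail n.+1 X i ^+ 2 by rewrite sqr_ge0.
  exact: (psumr_eq0P sqr_tail_ge0 tail_sqr0 (i := Ordinal lt_tn)).
by rewrite -XE (tail_eq0 sum_X0 tail0).
Qed.

Lemma pay_diff j k :
  pay j.+1 k - pay j k = a * (k == j)%:R + b * (k == j.+1)%:R - (j < k)%N%:R.
Proof.
rewrite /pay; have [lt_kj|lt_jk|->] := ltngtP k j.
- by rewrite ltnS (ltnW lt_kj) (ltn_eqF (leqW lt_kj)) /=; field.
- rewrite ltnS leqNgt lt_jk /= eq_sym.
  by have [->|ne_kSj] := eqVneq k j.+1; rewrite /=; field.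
- by rewrite ltnSn (ltn_eqF (ltnSn j)) /=; field.
Qed.

Lemma payoffS n x j : (j < n)%N ->
  payoff n x j.+1 = payoff n x j + a * x j + b * x j.+1 - tail n.+1 x j.
Proof.
move=> lt_jn; suff e : payoff n x j.+1 - payoff n x j =
  a * x j + b * x j.+1 - tail n.+1 x j by rewrite -[LHS](subrK (payoff n x j)) e; ring.
rewrite /payoff -sumrB; under eq_bigr => k _ do rewrite -mulrBl pay_diff.
rewrite tailE -(sum_delta x (ltnW lt_jn : (j < n.+1)%N)).
rewrite -(sum_delta x (lt_jn : (j.+1 < n.+1)%N)) !mulr_sumr -big_split -sumrB /=.
by apply: eq_bigr => k _; ring.
Qed.

End Payoffs.

Section Equalizing.
Variables (R : realFieldType) (n s : nat) (v rho : R).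
Local Notation a := (v / 2 + rho).
Local Notation b := (v / 2 - rho).
Implicit Types P : nat -> R.

(* The indifference conditions for a strategy supported on [{0, ..., s} U {n}]:
   against [P], the pure strategies [0, ..., s] and [n] all earn the same payoff. *)
Definition equalizing (P : nat -> R) : Prop :=
  [/\ forall k, (s < k < n)%N -> P k = 0,
      a * P s = (n%:R - s%:R - b) * P n,
      forall i, i.+1 = s -> a * P i = (1 - b) * P s + P n
    & forall i, (i.+2 <= s)%N -> a * P i = (1 + 2 * rho) * P i.+1 + b * P i.+2].

Lemma equalizing_scale P c : equalizing P -> equalizing (fun k => P k * c).
Proof.
case=> [P0 Ps Ps1 PSS]; split=> [k /P0->|||i /PSS e]; rewrite ?mul0r //.
- by rewrite mulrA Ps; ring.
- by move=> i /Ps1 e; rewrite mulrA e; ring.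
- by rewrite mulrA e; ring.
Qed.

Lemma tail_support P : (forall k, (s < k < n)%N -> P k = 0) ->
  forall j, (s <= j < n)%N -> tail n.+1 P j = P n.
Proof.
move=> P0 j /andP[le_sj lt_jn]; rewrite tailE -(sum_delta P (ltnSn n)).
apply: eq_bigr => k _; have le_kn : (k <= n)%N by rewrite -ltnS.
have [lt_jk|le_kj] := ltnP j k; last by rewrite (ltn_eqF (leq_ltn_trans le_kj lt_jn)).
have [lt_kn|ge_kn] := ltnP k n; first by rewrite P0 ?mulr0 //; lia.
have -> : (k : nat) = n by lia.
by rewrite eqxx.
Qed.

Hypothesis lt_sn : (s < n)%N.

Lemma equalizing_tail P : equalizing P ->
  forall j, (j < s)%N -> tail n.+1 P j = a * P j + b * P j.+1.
Proof.
case=> [P0 Ps Ps1 PSS] j lt_js.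
pose Pr j := (j < s)%N -> tail n.+1 P j = a * P j + b * P j.+1.
apply: (@down_ind s Pr _ j (ltnW lt_js)) lt_js => {}j _ IH lt_js.
rewrite tailS; last by lia.
have [eq_Sjs|lt_Sjs] := eqVneq j.+1 s.
  by rewrite eq_Sjs (tail_support P0) ?leqnn // Ps1 //; ring.
have IHS : tail n.+1 P j.+1 = a * P j.+1 + b * P j.+2 by apply: IH; lia.
by rewrite IHS (PSS j); [ring | lia].
Qed.

Lemma payoff_flat P : equalizing P ->
  forall j, (j <= s)%N -> payoff v rho n P j = payoff v rho n P 0.
Proof.
move=> eqP; elim=> [//|j IH] le_Sjs.
by rewrite payoffS ?equalizing_tail ?IH //; [ring | lia | lia].
Qed.

Lemma payoff_out P : equalizing P -> forall j, (s < j <= n)%N ->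
  payoff v rho n P j = payoff v rho n P 0 + (n%:R - j%:R - b) * P n + b * P j.
Proof.
move=> eqP; have [P0 Ps _ _] := eqP; elim=> [|j IH] /andP[lt_sSj le_Sjn] //.
rewrite payoffS ?(tail_support P0) //; try lia.
have [->|ne_js] := eqVneq j s.
  by rewrite payoff_flat // Ps -(@natr1 R s); ring.
by rewrite IH ?(P0 j) -?(@natr1 R j); [ring | lia..].
Qed.

Lemma equalizing_gt0 P : 0 <= rho -> 0 < b -> 0 < n%:R - s%:R - b ->
  n%:R - s%:R - b <= 1 -> equalizing P -> 0 < P n -> forall k, (k <= s)%N -> 0 < P k.
Proof.
move=> rho_ge0 b_gt0 gap_gt0 gap_le1 [_ Ps Ps1 PSS] Pn_gt0.
have a_gt0 : 0 < a by lra.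
have Ps_gt0 : 0 < P s by rewrite -(pmulr_rgt0 _ a_gt0) Ps mulr_gt0.
apply: down_ind => k le_ks IH.
have [->|ne_ks] := eqVneq k s; first exact: Ps_gt0.
have [eq_Sks|ne_Sks] := eqVneq k.+1 s.
  rewrite -(pmulr_rgt0 _ a_gt0) -(pmulr_rgt0 _ a_gt0) (Ps1 k eq_Sks) mulrDr mulrCA Ps.
  (* with [t := n - s - b] in (0, 1]: [(1 - b) t + a = t + b (1 - t) + 2 rho > 0] *)
  have t_le1 : 0 <= 1 - (n%:R - s%:R - b) by lra.
  by have := mulr_ge0 (ltW b_gt0) t_le1; nra.
have PS_gt0 : 0 < P k.+1 by apply: IH; lia.
have PSS_gt0 : 0 < P k.+2 by apply: IH; lia.
rewrite -(pmulr_rgt0 _ a_gt0) PSS; last by lia.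
by have := mulr_gt0 b_gt0 PSS_gt0; nra.
Qed.

Lemma equalizing_nash P : n%:R - s%:R - b <= 1 ->
  equalizing P -> (forall k, (k <= n)%N -> 0 <= P k) ->
  \sum_(k < n.+1) P k = 1 -> nash (payB n v rho) (fun k : 'I_n.+1 => P k).
Proof.
move=> gap_le1 eqP P_ge0 sum_P1; have [P0 _ _ _] := eqP.
have payoffE (j : 'I_n.+1) :
    \sum_(k < n.+1) payB n v rho j k * P k = payoff v rho n P j.
  by apply: eq_bigr => k _; rewrite payBE.
have payoff_n : payoff v rho n P n = payoff v rho n P 0.
  by rewrite payoff_out ?leqnn ?lt_sn //; ring.
apply: (nash_of_payoffs (M := payoff v rho n P 0)) => [|j|j].
- by apply: simplex_of_ge0 => // k; apply: P_ge0; rewrite -ltnS.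
- rewrite payoffE; have le_jn : (j <= n)%N by rewrite -ltnS.
  have [le_js|lt_sj] := leqP j s; first by rewrite payoff_flat.
  have [lt_jn|ge_jn] := ltnP j n; last by rewrite (_ : (j : nat) = n) ?payoff_n //; lia.
  rewrite payoff_out ?lt_sj // (P0 j) ?lt_sj // mulr0 addr0 gerDl.
  have : s%:R + 1 <= j%:R :> R by rewrite natr1 ler_nat.
  have := P_ge0 n (leqnn n); nra.
- rewrite payoffE => Pj_ne0; have [le_js|lt_sj] := leqP j s; first by rewrite payoff_flat.
  have [lt_jn|ge_jn] := ltnP j n; first by rewrite P0 ?eqxx ?lt_sj in Pj_ne0.
  by rewrite (_ : (j : nat) = n) ?payoff_n //; have := ltn_ord j; lia.
Qed.

Lemma equalizing_nash_normalized P : 0 <= rho -> 0 < b ->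
  0 < n%:R - s%:R - b -> n%:R - s%:R - b <= 1 -> equalizing P -> P n != 0 ->
  nash (payB n v rho) (fun k : 'I_n.+1 => P k / \sum_(i < n.+1) P i).
Proof.
move=> rho_ge0 b_gt0 gap_gt0 gap_le1 eqP Pn_ne0; pose Q k := P k / P n.
have eqQ : equalizing Q := equalizing_scale (P n)^-1 eqP.
have Qn : Q n = 1 by rewrite /Q divff.
have Q_ge0 k : (k <= n)%N -> 0 <= Q k.
  move=> le_kn; have [le_ks|lt_sk] := leqP k s.
    by apply/ltW/(equalizing_gt0 _ _ _ _ eqQ); rewrite ?Qn.
  have [P0 _ _ _] := eqQ; have [lt_kn|ge_kn] := ltnP k n; first by rewrite P0 ?lt_sk.
  by rewrite (_ : k = n) ?Qn //; lia.
have sumQ_gt0 : 0 < \sum_(i < n.+1) Q i.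
  rewrite (bigD1 ord_max) //= Qn.
  have : 0 <= \sum_(i < n.+1 | i != ord_max) Q i.
    by apply: sumr_ge0 => i _; apply: Q_ge0; rewrite -ltnS.
  lra.
have sumPE : \sum_(i < n.+1) P i = P n * \sum_(i < n.+1) Q i.
  by rewrite mulr_sumr; apply: eq_bigr => i _; rewrite /Q; field.
have sumP_ne0 : \sum_(i < n.+1) P i != 0 by rewrite sumPE mulf_neq0 // lt0r_neq0.
apply: (@equalizing_nash (fun k => P k / \sum_(i < n.+1) P i)) => //.
- exact: equalizing_scale.
- move=> k le_kn; have -> : P k / \sum_(i < n.+1) P i = Q k / \sum_(i < n.+1) Q i.
    by rewrite sumPE /Q; field; rewrite Pn_ne0 gt_eqF.
  exact/divr_ge0/ltW/sumQ_gt0/Q_ge0.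
- by rewrite -mulr_suml divff.
Qed.

End Equalizing.

Lemma nash_pure (R : realFieldType) n (v rho : R) : 2 * n%:R + 2 * rho <= v ->
  nash (payB n v rho) (fun k : 'I_n.+1 => ((k : nat) == n)%:R).
Proof.
move=> v_ge.
have payoffE (j : 'I_n.+1) :
    \sum_(k < n.+1) payB n v rho j k * ((k : nat) == n)%:R = pay v rho j n.
  rewrite -(sum_delta (pay v rho j) (ltnSn n)).
  by apply: eq_bigr => k _; rewrite payBE mulrC.
apply: (nash_of_payoffs (M := pay v rho n n)) => [|j|j].
- apply: simplex_of_ge0 => [k|]; first by case: eqP.
  rewrite -[RHS](sum_delta (fun=> 1 : R) (ltnSn n)).
  by apply: eq_bigr => k _; rewrite mulr1.
- rewrite payoffE /pay ltnNge -ltnS ltn_ord /= ltnn eqxx.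
  by case: eqP => // _; have := ler0n R j; lra.
- rewrite payoffE; have [-> //|ne_jn] := eqVneq (j : nat) n.
  by rewrite eqxx.
Qed.

Section Weights.
Variables (R : realFieldType) (n s : nat) (v rho : R).
Local Notation a := (v / 2 + rho).
Local Notation b := (v / 2 - rho).
Local Notation e := (s%:R + 1 - n%:R : R).
Local Notation w := (lucas (- (2 * rho + 1)) (- (a * b))).

(* Since [w (m + 1) = u_m] ([uu_nat]), [zeta m] is the paper's brace
   [u_(m+1) + (s + 1 - n + v/2 + rho) u_m + (s + 1 - n)(v/2 + rho) u_(m-1)],
   [weight k] is [c p_k] and [weight_sum] is [c]. *)
Definition zeta (m : nat) : R := w m.+2 + (e + a) * w m.+1 + e * a * w m.

Definition weight (k : nat) : R :=
  if (k <= s)%N then (- a) ^+ k * zeta (s - k)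
  else if (k < n)%N then 0 else (- a) ^+ s.+1.

Definition weight_sum : R := b * zeta s - zeta s.+1.

Lemma zetaSS m : zeta m.+2 = - (2 * rho + 1) * zeta m.+1 + a * b * zeta m.
Proof. by rewrite /zeta !lucasSS; ring. Qed.

Lemma zeta0 : zeta 0 = e + a - (2 * rho + 1).
Proof. by rewrite /zeta lucasSS lucas1 lucas0; ring. Qed.

Lemma zeta1 : zeta 1 = a + (b - 1) * zeta 0.
Proof. by rewrite zeta0 /zeta !lucasSS lucas1 lucas0; field. Qed.

Hypothesis lt_sn : (s < n)%N.

Lemma weightn : weight n = (- a) ^+ s.+1.
Proof. by rewrite /weight leqNgt lt_sn ltnn. Qed.

Lemma weightn_neq0 : a != 0 -> weight n != 0.
Proof. by move=> a_neq0; rewrite weightn expf_neq0 // oppr_eq0. Qed.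

Lemma weight_equalizing : equalizing n s v rho weight.
Proof.
split=> [k /andP[lt_sk lt_kn]||i eq_Sis|i le_SSis].
- by rewrite /weight leqNgt lt_sk lt_kn.
- by rewrite weightn /weight leqnn subnn zeta0 exprS; field.
- have le_is : (i <= s)%N by rewrite -eq_Sis.
  by rewrite weightn /weight leqnn le_is subnn -eq_Sis subSnn zeta1 !exprS; field.
- rewrite /weight le_SSis ltnW ?(ltnW le_SSis) //.
  rewrite (_ : (s - i = (s - i.+2).+2)%N); last by lia.
  by rewrite (_ : (s - i.+1 = (s - i.+2).+1)%N) ?zetaSS ?exprS; [ring | lia].
Qed.

Lemma sum_weight : \sum_(k < n.+1) weight k = weight_sum.
Proof.
have [P0 _ _ _] := weight_equalizing.
have weight0 : weight 0 = zeta s by rewrite /weight leq0n subn0 expr0 mul1r.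
rewrite sum_tail0 // weight0 /weight_sum; have [s0|s_gt0] := posnP s.
  rewrite (tail_support P0) ?weightn; last by lia.
  by rewrite s0 zeta1 expr1; ring.
rewrite (equalizing_tail lt_sn weight_equalizing) // weight0 /weight s_gt0 subn1 expr1.
have -> : zeta s.+1 = - (2 * rho + 1) * zeta s + a * b * zeta s.-1.
  by rewrite -[in LHS](prednK s_gt0) zetaSS prednK.
ring.
Qed.

End Weights.

Lemma nash_weights (R : realFieldType) n s (v rho : R) :
  0 <= rho -> rho < v / 2 -> (s < n)%N ->
  n%:R - 1 + rho <= v / 2 + s%:R -> v / 2 + s%:R < n%:R + rho ->
  nash (payB n v rho) (fun k => weight n s v rho k / weight_sum n s v rho).
Proof.
move=> rho_ge0 rho_lt lt_sn s_lb s_ub; rewrite -sum_weight //.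
apply: (@equalizing_nash_normalized _ n s); rewrite ?weightn_neq0 //; try lra.
exact: weight_equalizing.
Qed.

Local Open Scope complex_scope.

Section ChebyshevForm.
Variables (R : rcfType) (v rho : R).
Local Notation a := (v / 2 + rho).
Local Notation b := (v / 2 - rho).
Local Notation w := (lucas (- (2 * rho + 1)) (- (a * b))).

Lemma gam_sqr : 0 <= rho -> rho <= v / 2 -> gam v rho ^+ 2 = a * b.
Proof.
move=> rho_ge0 rho_le; rewrite /gam sqr_sqrtr; first by field.
rewrite (_ : v ^+ 2 / 4 - rho ^+ 2 = a * b); last by field.
by apply: mulr_ge0; lra.
Qed.

Lemma uu_lucas m : 0 <= rho -> rho < v / 2 -> uu v rho (m%:Z - 1) = (w m)%:C.
Proof.
move=> rho_ge0 rho_lt; case: m => [|m]; first by rewrite /uu /= horner0 mulr0.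
have -> : (m.+1%:Z - 1 = m%:Z)%R by rewrite -addn1 PoszD addrK.
rewrite /uu /chebUz; set g := (gam v rho)%:C; set y := - 'i * g.
have g_neq0 : g != 0.
  rewrite /g fmorph_eq0 -sqrf_eq0 gam_sqr ?(ltW rho_lt) // mulf_eq0 negb_or.
  by apply/andP; split; apply/eqP; lra.
have ii : 'i * 'i = -1 :> R[i] by rewrite -expr2 sqr_i.
change (y ^+ m * (chebU m).[- 'i * (2 * rho + 1)%:C / (2 * g)] = (w m.+1)%:C).
rewrite chebU_lucas rmorph_lucas !rmorphN rmorphM /=; congr lucas.
  rewrite /y; transitivity ('i * 'i * (2 * rho + 1)%:C * (2 * g / (2 * g))); first by ring.
  by rewrite ii divff ?mulf_neq0 ?pnatr_eq0 //; ring.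
rewrite -rmorphM -gam_sqr ?(ltW rho_lt) // rmorphXn -/g /y.
by transitivity ('i * 'i * g ^+ 2); [ring | rewrite ii; ring].
Qed.

Lemma uu_nat m : 0 <= rho -> rho < v / 2 -> uu v rho m%:Z = (w m.+1)%:C.
Proof. by move=> rho_ge0 rho_lt; rewrite -uu_lucas // -addn1 PoszD addrK. Qed.

Lemma cc_weight_sum n s : 0 <= rho -> rho < v / 2 -> (s < n)%N ->
  cc n s v rho = (weight_sum n s v rho)%:C.
Proof.
move=> rho_ge0 rho_lt lt_sn.
rewrite /cc !uu_nat // uu_lucas // gam_sqr ?(ltW rho_lt) // /weight_sum /zeta.
rewrite !addn2 !addn1 !natrB; try lia.
by rewrite !(rmorphB, rmorphD, rmorphM, rmorphN, rmorph_nat, rmorph1) /=; ring.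
Qed.

Lemma pform_weight n s k : 0 <= rho -> rho < v / 2 -> (s < n)%N ->
  pform n s v rho k = (weight n s v rho k / weight_sum n s v rho)%:C.
Proof.
move=> rho_ge0 rho_lt lt_sn; rewrite /pform cc_weight_sum // /weight fmorph_div /=.
have [le_ks|lt_sk] := leqP k s.
  have -> : (s%:Z - k%:Z + 1 = (s - k).+1%:Z)%R by rewrite subzn // -addn1 PoszD.
  have -> : (s%:Z - k%:Z - 1 = (s - k)%:Z - 1)%R by rewrite subzn.
  rewrite subzn // !uu_nat // uu_lucas // /zeta.
  by rewrite !(rmorphB, rmorphD, rmorphM, rmorphN, rmorphXn, rmorph_nat, rmorph1) /=; ring.
have [lt_kn|//] := ltnP k n; first by rewrite rmorph0 mul0r.
by rewrite !(rmorphN, rmorphD, rmorphXn) /= mulrC.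
Qed.

End ChebyshevForm.

Lemma support_index (R : realFieldType) n (v rho : R) :
  rho <= v / 2 -> v < 2 * n%:R + 2 * rho ->
  exists! s : nat, (s < n)%N /\ n%:R - 1 + rho <= v / 2 + s%:R /\ v / 2 + s%:R < n%:R + rho.
Proof.
move=> rho_le v_lt; pose y := n%:R - 1 + rho - v / 2.
have [s [lt_sn /andP[y_le_s s_lt_y1]]] : exists s, (s < n)%N /\ y <= s%:R < y + 1.
  by apply: nat_in_unit_interval; rewrite /y; lra.
rewrite /y in y_le_s s_lt_y1; exists s; split=> [|t [_ [t_lb t_ub]]].
  by split=> //; split; lra.
by apply: (nat_in_unit_interval_unique (y := y)); rewrite /y; apply/andP; split; lra.
Qed.

Theorem theorem5p2 (R : rcfType) (n : nat) (v rho : R) :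
  (1 <= n)%N -> 0 < v -> 0 <= rho -> rho < v / 2 ->
  exists p : 'I_n.+1 -> R,
    isESS (payB n v rho) p /\
    (forall q, isESS (payB n v rho) q -> q = p) /\
    (2 * n%:R + 2 * rho <= v -> forall k : 'I_n.+1, p k = ((k : nat) == n)%:R) /\
    (v < 2 * n%:R + 2 * rho ->
       (exists! s : nat, (s < n)%N /\
          n%:R - 1 + rho <= v / 2 + s%:R /\ v / 2 + s%:R < n%:R + rho) /\
       (forall s : nat, (s < n)%N ->
          n%:R - 1 + rho <= v / 2 + s%:R -> v / 2 + s%:R < n%:R + rho ->
          forall k : 'I_n.+1, (p k)%:C = pform n s v rho k)).
Proof.
move=> _ _ rho_ge0 rho_lt.
have ESS_of p : nash (payB n v rho) p ->
    isESS (payB n v rho) p /\ forall q, isESS (payB n v rho) q -> q = p.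
  have negB : zero_sum_negdef (payB n v rho) by exact: payB_zero_sum_negdef.
  by move=> Np; split=> [|q]; [exact: nash_isESS | exact: isESS_unique].
have [v_ge|v_lt] := lerP (2 * n%:R + 2 * rho) v.
  exists (fun k => ((k : nat) == n)%:R); have [ESS uniq] := ESS_of _ (nash_pure v_ge).
  by do 3!split=> //.
have s_ex := support_index (ltW rho_lt) v_lt.
have [s [[lt_sn [s_lb s_ub]] s_uniq]] := s_ex.
exists (fun k => weight n s v rho k / weight_sum n s v rho).
have [ESS uniq] := ESS_of _ (nash_weights rho_ge0 rho_lt lt_sn s_lb s_ub).
do 4!split=> //; move=> t lt_tn t_lb t_ub k.
by rewrite -(s_uniq t) ?pform_weight.
Qed.
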